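(* Let $\mathbb{Z}$ be the infinite line graph with unit weights (vertex set $\mathbb{Z}$, $x\sim y$ iff $|x-y|=1$, $\mu_x=1$, $\omega_{xy}=1$), so that $\Delta u(x)=u(x+1)+u(x-1)-2u(x)$. For every $\epsilon>0$ there exists a function $u:\mathbb{R}\times\mathbb{Z}\to\mathbb{R}$ with $u(\cdot,x)\in C^2(\mathbb{R})$ for each $x$, satisfying $\partial_t^2u(t,x)=\Delta u(t,x)$ for all $(t,x)\in\mathbb{R}\times\mathbb{Z}$, with $u(0,x)=\partial_tu(0,x)=0$ for all $x\in\mathbb{Z}$, such that $u\not\equiv0$, $u$ is not analytic in time (specifically $t\mapsto u(t,0)$ is not real analytic on $\mathbb{R}$), and for every $t\in\mathbb{R}$, $$\lim_{|x|\to\infty}|u(t,x)|\,e^{-(2+\epsilon)|x|\ln|x|}=0.$$ *)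

From Stdlib Require Import Reals ZArith.
From Coquelicot Require Import Coquelicot.
Open Scope R_scope.

Definition C2 (f : R -> R) : Prop :=
  (forall t, ex_derive f t) /\
  (forall t, ex_derive (Derive f) t) /\
  (forall t, continuous (Derive (Derive f)) t).

Definition real_analytic (f : R -> R) : Prop :=
  forall t0 : R, exists (a : nat -> R) (r : R), 0 < r /\
    forall t, Rabs (t - t0) < r -> is_pseries a (t - t0) (f t).

Definition lap_Z (v : Z -> R) (x : Z) : R :=
  v (x + 1)%Z + v (x - 1)%Z - 2 * v x.

From Stdlib Require Import Reals ZArith Lra Lia List FunctionalExtensionality.
From Coquelicot Require Import Coquelicot.
Open Scope R_scope.

(* A non-trivial solution of the wave equation on the lattice Z with zero
   Cauchy data, in the spirit of Tychonoff's example for the heat equation.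

   Take u(t,0) = phi(t), where phi(t) = e^(-1/t) for t > 0 and phi(t) = 0 for
   t <= 0, and solve the equation u'' = u(x+1) + u(x-1) - 2 u(x) "in space":
   u(t,1) = (phi'' + 2 phi)/2 and u(t,n+2) = u''(t,n+1) + 2 u(t,n+1) - u(t,n),
   extended evenly to x < 0.  Every time derivative of a function
   t |-> P(1/t) e^(-1/t) (extended by 0) is again of this form, so
   u(t,x) = P_|x|(1/t) e^(-1/t) for polynomials P_n given by a recurrence on
   coefficient lists. *)

Fixpoint peval (l : list R) (y : R) : R :=
  match l with nil => 0 | a :: l' => a + y * peval l' y end.

Fixpoint padd (a b : list R) : list R :=
  match a, b with
  | nil, _ => b
  | _, nil => a
  | x :: a', z :: b' => (x + z) :: padd a' b'
  end.

Definition pscale (c : R) (l : list R) : list R := map (Rmult c) l.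

Fixpoint pderiv (l : list R) : list R :=
  match l with nil => nil | a :: l' => padd l' (0 :: pderiv l') end.

Lemma peval_padd a b y : peval (padd a b) y = peval a y + peval b y.
Proof.
  revert b; induction a as [|x a IH]; intros [|z b]; simpl; try ring.
  rewrite IH; ring.
Qed.

Lemma peval_pscale c l y : peval (pscale c l) y = c * peval l y.
Proof. induction l as [|x l IH]; simpl; [ring|]. rewrite IH; ring. Qed.

Lemma is_derive_peval l y : is_derive (peval l) y (peval (pderiv l) y).
Proof.
  induction l as [|a l IH]; simpl.
  - apply (is_derive_const (V := R_NormedModule)).
  - auto_derive; [exists (peval (pderiv l) y); exact IH|].
    change (fun x => peval l x) with (peval l).
    rewrite (is_derive_unique _ _ _ IH), peval_padd; simpl; ring.
Qed.

(* [pdt P] is the polynomial y^2 (P(y) - P'(y)): it describes the time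
   derivative of t |-> P(1/t) e^(-1/t), see [is_derive_flat]. *)
Definition pdt (l : list R) : list R := 0 :: 0 :: padd l (pscale (-1) (pderiv l)).

Lemma peval_pdt l y : peval (pdt l) y = y ^ 2 * (peval l y - peval (pderiv l) y).
Proof. unfold pdt; simpl. rewrite peval_padd, peval_pscale. ring. Qed.

Definition pdt2 (l : list R) : list R := pdt (pdt l).

Fixpoint pnorm (l : list R) : R := match l with nil => 0 | a :: l' => Rabs a + pnorm l' end.

Lemma pnorm_ge0 l : 0 <= pnorm l.
Proof. induction l as [|a l IH]; simpl; [lra|]. pose proof (Rabs_pos a); lra. Qed.

Lemma peval_bound l y M : Rabs y <= M -> 1 <= M -> Rabs (peval l y) <= pnorm l * M ^ length l.
Proof.
  intros Hy HM. induction l as [|a l IH]; simpl.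
  - rewrite Rabs_R0; lra.
  - pose proof (pnorm_ge0 l). pose proof (pow_R1_Rle M (length l) HM).
    eapply Rle_trans; [apply Rabs_triang|]. rewrite Rabs_mult.
    assert (Rabs y * Rabs (peval l y) <= M * (pnorm l * M ^ length l))
      by (apply Rmult_le_compat; auto using Rabs_pos).
    assert (Rabs a <= Rabs a * (M * M ^ length l)).
    { rewrite <- (Rmult_1_r (Rabs a)) at 1.
      apply Rmult_le_compat_l; [apply Rabs_pos|]. nra. }
    nra.
Qed.

Lemma length_padd a b : length (padd a b) = Nat.max (length a) (length b).
Proof. revert b; induction a; intros [|z b]; simpl; auto. Qed.

Lemma pnorm_padd a b : pnorm (padd a b) <= pnorm a + pnorm b.
Proof.
  revert b; induction a as [|x a IH]; intros [|z b]; simpl; try lra.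
  pose proof (Rabs_triang x z). pose proof (IH b). lra.
Qed.

Lemma length_pscale c a : length (pscale c a) = length a.
Proof. apply length_map. Qed.

Lemma pnorm_pscale c a : pnorm (pscale c a) = Rabs c * pnorm a.
Proof. induction a as [|x a IH]; simpl; [ring|]. rewrite IH, Rabs_mult; ring. Qed.

Lemma length_pderiv l : (length (pderiv l) <= length l)%nat.
Proof. induction l; simpl; auto. rewrite length_padd. simpl. lia. Qed.

Lemma pnorm_pderiv l : pnorm (pderiv l) <= INR (length l) * pnorm l.
Proof.
  induction l as [|a l IH]; simpl pderiv; simpl pnorm; [lra|].
  pose proof (pnorm_padd l (0 :: pderiv l)) as H. simpl pnorm in H. rewrite Rabs_R0 in H.
  rewrite length_cons, S_INR.
  pose proof (pnorm_ge0 l). pose proof (Rabs_pos a). pose proof (pos_INR (length l)). nra.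
Qed.

Lemma length_pdt l : (length (pdt l) <= length l + 2)%nat.
Proof. unfold pdt. simpl. rewrite length_padd, length_pscale. pose proof (length_pderiv l). lia. Qed.

Lemma pnorm_pdt l : pnorm (pdt l) <= (1 + INR (length l)) * pnorm l.
Proof.
  unfold pdt. simpl. rewrite Rabs_R0.
  pose proof (pnorm_padd l (pscale (-1) (pderiv l))) as H.
  rewrite pnorm_pscale, Rabs_left in H by lra. pose proof (pnorm_pderiv l). lra.
Qed.

Lemma length_pdt2 l : (length (pdt2 l) <= length l + 4)%nat.
Proof. unfold pdt2. pose proof (length_pdt l). pose proof (length_pdt (pdt l)). lia. Qed.

Lemma pnorm_pdt2 l : pnorm (pdt2 l) <= (3 + INR (length l)) ^ 2 * pnorm l.
Proof.
  unfold pdt2. pose proof (pnorm_pdt (pdt l)). pose proof (pnorm_pdt l).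
  pose proof (le_INR _ _ (length_pdt l)) as Hlen. rewrite plus_INR in Hlen.
  replace (INR 2) with 2 in Hlen by (simpl; lra).
  pose proof (pnorm_ge0 l). pose proof (pnorm_ge0 (pdt l)). pose proof (pos_INR (length l)).
  apply (Rle_trans _ ((3 + INR (length l)) * pnorm (pdt l))); [nra|].
  replace ((3 + INR (length l)) ^ 2 * pnorm l) with ((3 + INR (length l)) * ((3 + INR (length l)) * pnorm l)) by ring.
  apply Rmult_le_compat_l; nra.
Qed.

(* y^k <= k! e^y for y >= 0: one term of the exponential series. *)
Lemma pow_le_fact_exp y k : 0 <= y -> y ^ k <= INR (fact k) * exp y.
Proof.
  intros Hy. pose proof (INR_fact_lt_0 k) as Hf.
  assert (Hterm : y ^ k / INR (fact k) <= exp y).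
  { eapply Rle_trans; [|apply (exp_ge_taylor y k Hy)].
    destruct k as [|k]; [apply Rle_refl|rewrite tech5].
    assert (0 <= sum_f_R0 (fun i => y ^ i / INR (fact i)) k).
    { apply cond_pos_sum; intro i. apply Rdiv_le_0_compat; [apply pow_le; lra|apply INR_fact_lt_0]. }
    lra. }
  replace (y ^ k) with (INR (fact k) * (y ^ k / INR (fact k))) by (field; lra).
  apply Rmult_le_compat_l; lra.
Qed.

Definition flat (l : list R) (t : R) : R :=
  if Rlt_dec 0 t then peval l (/ t) * exp (- / t) else 0.

Lemma flat_pos l t : 0 < t -> flat l t = peval l (/ t) * exp (- / t).
Proof. intros H; unfold flat; destruct (Rlt_dec 0 t); [reflexivity|lra]. Qed.

Lemma flat_nonpos l t : t <= 0 -> flat l t = 0.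
Proof. intros H; unfold flat; destruct (Rlt_dec 0 t); [lra|reflexivity]. Qed.

Lemma flat_padd a b t : flat (padd a b) t = flat a t + flat b t.
Proof.
  destruct (Rlt_dec 0 t).
  - rewrite !flat_pos, peval_padd by lra; ring.
  - rewrite !flat_nonpos by lra; ring.
Qed.

Lemma flat_pscale c a t : flat (pscale c a) t = c * flat a t.
Proof.
  destruct (Rlt_dec 0 t).
  - rewrite !flat_pos, peval_pscale by lra; ring.
  - rewrite !flat_nonpos by lra; ring.
Qed.

(* For t > 0 we use e^(-1/t) <= 1 and |1/t| <= max 1 (1/t). *)
Lemma flat_bound l t : 0 < t -> Rabs (flat l t) <= pnorm l * Rmax 1 (/ t) ^ length l.
Proof.
  intros Ht. rewrite flat_pos, Rabs_mult, (Rabs_right (exp _)) by (auto; left; apply exp_pos).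
  assert (exp (- / t) <= 1).
  { rewrite <- exp_0. left; apply exp_increasing. pose proof (Rinv_0_lt_compat t Ht). lra. }
  assert (Rabs (/ t) <= Rmax 1 (/ t)).
  { rewrite Rabs_right; [apply Rmax_r|left; apply Rinv_0_lt_compat; lra]. }
  pose proof (peval_bound l (/ t) (Rmax 1 (/ t)) ltac:(assumption) (Rmax_l _ _)).
  pose proof (Rabs_pos (peval l (/ t))). pose proof (exp_pos (- / t)). nra.
Qed.

(* Near 0 the flat function is O(h^2): the exponential e^(-1/h) beats any
   power of 1/h. *)
Lemma flat_quadratic l : exists C,
  forall h, Rabs h <= 1 -> Rabs (flat l h) <= C * h ^ 2.
Proof.
  set (k := (length l + 2)%nat).
  exists (pnorm l * INR (fact k)). pose proof (pnorm_ge0 l). pose proof (INR_fact_lt_0 k).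
  intros h Hh.
  destruct (Rle_lt_dec h 0) as [Hn|Hp].
  { rewrite flat_nonpos, Rabs_R0 by lra. apply Rmult_le_pos; [nra|apply pow2_ge_0]. }
  rewrite Rabs_right in Hh by lra.
  set (y := / h).
  assert (Hy : 1 <= y) by (unfold y; rewrite <- Rinv_1; apply Rinv_le_contravar; lra).
  assert (Hyh : y * h = 1) by (unfold y; field; lra).
  pose proof (pow_le_fact_exp y k ltac:(lra)) as Hexp.
  rewrite flat_pos by lra. fold y. rewrite Rabs_mult, (Rabs_right (exp _)) by (left; apply exp_pos).
  pose proof (peval_bound l y y ltac:(rewrite Rabs_right; lra) Hy) as Hp'.
  assert (Hk : y ^ k = y ^ length l * y ^ 2) by (unfold k; rewrite pow_add; ring).
  assert (Hh2 : h ^ 2 * y ^ 2 = 1) by (rewrite <- Rpow_mult_distr, Rmult_comm, Hyh; ring).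
  rewrite exp_Ropp. pose proof (exp_pos y).
  apply (Rmult_le_reg_r (exp y)); [lra|].
  rewrite Rmult_assoc, Rinv_l, Rmult_1_r by lra.
  eapply Rle_trans; [exact Hp'|].
  assert (0 <= y ^ length l) by (apply pow_le; lra).
  replace (pnorm l * y ^ length l) with (pnorm l * y ^ k * h ^ 2)
    by (rewrite Hk, <- (Rmult_1_r (pnorm l * y ^ length l)), <- Hh2; ring).
  replace (pnorm l * INR (fact k) * h ^ 2 * exp y) with (pnorm l * (INR (fact k) * exp y) * h ^ 2)
    by ring.
  apply Rmult_le_compat_r; [apply pow2_ge_0|]. apply Rmult_le_compat_l; lra.
Qed.

Lemma is_derive_quadratic_bound (f : R -> R) C :
  f 0 = 0 -> (forall h, Rabs h <= 1 -> Rabs (f h) <= C * h ^ 2) -> is_derive f 0 0.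
Proof.
  intros Hf0 Hbound. apply is_derive_Reals. intros eps Heps.
  assert (Hd : 0 < Rmin 1 (eps / (Rabs C + 1))).
  { apply Rmin_pos; [lra|]. apply Rdiv_lt_0_compat; [lra|pose proof (Rabs_pos C); lra]. }
  exists (mkposreal _ Hd). intros h Hh0 Hh. simpl in Hh.
  pose proof (Rmin_l 1 (eps / (Rabs C + 1))) as Hmin1.
  pose proof (Rmin_r 1 (eps / (Rabs C + 1))) as Hmin2.
  pose proof (Hbound h ltac:(lra)) as Hb.
  assert (Hha : 0 < Rabs h) by (apply Rabs_pos_lt; exact Hh0).
  rewrite Rplus_0_l, Hf0.
  replace ((f h - 0) / h - 0) with (f h / h) by (field; exact Hh0).
  rewrite Rabs_div by exact Hh0.
  apply (Rmult_lt_reg_r (Rabs h)); [exact Hha|].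
  unfold Rdiv; rewrite Rmult_assoc, Rinv_l, Rmult_1_r by lra.
  assert (Hh2 : h ^ 2 = Rabs h * Rabs h)
    by (rewrite <- Rabs_mult, Rabs_right; [ring|apply Rle_ge; nra]).
  assert (Hsmall : Rabs h * (Rabs C + 1) < eps).
  { apply (Rmult_lt_reg_r (/ (Rabs C + 1))); [apply Rinv_0_lt_compat; pose proof (Rabs_pos C); lra|].
    rewrite Rmult_assoc, Rinv_r, Rmult_1_r by (pose proof (Rabs_pos C); lra). exact (Rlt_le_trans _ _ _ Hh Hmin2). }
  assert (C * h ^ 2 <= Rabs h * (Rabs C + 1) * Rabs h).
  { rewrite Hh2. pose proof (Rle_abs C). pose proof (Rabs_pos h). nra. }
  apply (Rmult_lt_compat_r (Rabs h)) in Hsmall; [lra|exact Hha].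
Qed.

Lemma is_derive_flat l t : is_derive (flat l) t (flat (pdt l) t).
Proof.
  destruct (Rtotal_order t 0) as [Hneg|[->|Hpos]].
  - rewrite flat_nonpos by lra.
    apply (is_derive_ext_loc (fun _ => 0)); [|apply (is_derive_const (V := R_NormedModule))].
    apply (filter_imp (fun s => s < 0)); [|apply open_lt; exact Hneg].
    intros s Hs; rewrite flat_nonpos by lra; reflexivity.
  - rewrite flat_nonpos by lra.
    destruct (flat_quadratic l) as [C HC].
    exact (is_derive_quadratic_bound (flat l) C (flat_nonpos l 0 (Rle_refl 0)) HC).
  - rewrite flat_pos by lra.
    apply (is_derive_ext_loc (fun s => peval l (/ s) * exp (- / s))).
    { apply (filter_imp (fun s => 0 < s)); [|apply open_gt; exact Hpos].
      intros s Hs; rewrite flat_pos by lra; reflexivity. }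
    pose proof (is_derive_peval l (/ t)) as Hpe.
    auto_derive; [split; [exists (peval (pderiv l) (/ t)); exact Hpe|lra]|].
    change (fun x => peval l x) with (peval l).
    rewrite (is_derive_unique _ _ _ Hpe), peval_pdt. field. lra.
Qed.

Lemma Derive_flat l : Derive (flat l) = flat (pdt l).
Proof. apply functional_extensionality; intro t. apply is_derive_unique, is_derive_flat. Qed.

Lemma Derive2_flat l : Derive (Derive (flat l)) = flat (pdt2 l).
Proof. rewrite !Derive_flat. reflexivity. Qed.

Lemma Derive_n_flat n l : Derive_n (flat l) n = flat (Nat.iter n pdt l).
Proof. induction n as [|n IH]; [reflexivity|]. simpl Derive_n. rewrite IH. apply Derive_flat. Qed.

Lemma flat_C2 l : C2 (flat l).
Proof.
  unfold C2. rewrite !Derive_flat. split; [|split]; intro t.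
  - eexists; apply is_derive_flat.
  - eexists; apply is_derive_flat.
  - apply (ex_derive_continuous (flat (pdt (pdt l)))). eexists; apply is_derive_flat.
Qed.

(* Solving the lattice wave equation u'' = u(x+1) + u(x-1) - 2u(x) for the
   outer neighbour: u(n+2) = u''(n+1) + 2 u(n+1) - u(n). *)
Definition wave_next (a b : list R) : list R :=
  padd (padd (pdt2 b) (pscale 2 b)) (pscale (-1) a).

Definition wave_poly0 : list R := 1 :: nil.

Definition wave_poly1 : list R := pscale (/ 2) (padd (pdt2 wave_poly0) (pscale 2 wave_poly0)).

Fixpoint wave_pair (n : nat) : list R * list R :=
  match n with
  | O => (wave_poly0, wave_poly1)
  | S n => (snd (wave_pair n), wave_next (fst (wave_pair n)) (snd (wave_pair n)))
  end.

Definition wave_poly (n : nat) : list R := fst (wave_pair n).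

Lemma wave_poly_SS n : wave_poly (S (S n)) = wave_next (wave_poly n) (wave_poly (S n)).
Proof. reflexivity. Qed.

Definition wave_sol (t : R) (x : Z) : R := flat (wave_poly (Z.abs_nat x)) t.

(* For x > 0 and x < 0 this is the recurrence at the outer neighbour, for
   x = 0 it is the definition of P_1 (using the symmetry u(t,-1) = u(t,1)). *)
Lemma wave_sol_equation t x :
  Derive (Derive (fun s => wave_sol s x)) t = lap_Z (wave_sol t) x.
Proof.
  unfold wave_sol, lap_Z. rewrite Derive2_flat.
  destruct (Z_lt_le_dec 0 x) as [Hpos|Hle].
  - destruct (Z.abs_nat x) as [|m] eqn:E; [lia|].
    replace (Z.abs_nat (x + 1)) with (S (S m)) by lia.
    replace (Z.abs_nat (x - 1)) with m by lia.
    rewrite wave_poly_SS. unfold wave_next. rewrite !flat_padd, !flat_pscale. ring.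
  - destruct (Z.eq_dec x 0) as [->|Hne].
    + change (Z.abs_nat (0 + 1)) with 1%nat. change (Z.abs_nat (0 - 1)) with 1%nat.
      change (wave_poly (Z.abs_nat 0)) with wave_poly0. change (wave_poly 1) with wave_poly1.
      unfold wave_poly1. rewrite flat_pscale, flat_padd, flat_pscale. field.
    + destruct (Z.abs_nat x) as [|m] eqn:E; [lia|].
      replace (Z.abs_nat (x - 1)) with (S (S m)) by lia.
      replace (Z.abs_nat (x + 1)) with m by lia.
      rewrite wave_poly_SS. unfold wave_next. rewrite !flat_padd, !flat_pscale. ring.
Qed.

Definition growth (n : nat) : R := 19 ^ n * INR (fact n) ^ 2.

Definition size_ok (n : nat) (l : list R) : Prop :=
  (length l <= 4 * n + 1)%nat /\ pnorm l <= growth n.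

Lemma growth_S n : growth (S n) = 19 * (INR n + 1) ^ 2 * growth n.
Proof. unfold growth. rewrite fact_simpl, mult_INR, S_INR. simpl. ring. Qed.

Lemma growth_pos n : 0 < growth n.
Proof. unfold growth. apply Rmult_lt_0_compat; apply pow_lt; [lra|apply INR_fact_lt_0]. Qed.

Lemma size_ok_next n a b : size_ok n a -> size_ok (S n) b -> size_ok (S (S n)) (wave_next a b).
Proof.
  intros [La Na] [Lb Nb]. unfold wave_next. split.
  - rewrite !length_padd, !length_pscale. pose proof (length_pdt2 b). lia.
  - pose proof (pnorm_padd (padd (pdt2 b) (pscale 2 b)) (pscale (-1) a)) as Hsum1.
    pose proof (pnorm_padd (pdt2 b) (pscale 2 b)) as Hsum2.
    rewrite !pnorm_pscale, (Rabs_left (-1)), (Rabs_right 2) in * by lra.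
    pose proof (pnorm_pdt2 b) as Hdt2.
    pose proof (le_INR _ _ Lb) as Hlen. rewrite plus_INR, mult_INR, (S_INR n) in Hlen.
    replace (INR 4) with 4 in Hlen by (simpl; lra). replace (INR 1) with 1 in Hlen by reflexivity.
    assert (Hsq : (3 + INR (length b)) ^ 2 <= 16 * (INR n + 2) ^ 2).
    { replace (16 * (INR n + 2) ^ 2) with ((4 * (INR n + 2)) ^ 2) by ring.
      apply pow_incr. pose proof (pos_INR (length b)). split; lra. }
    assert (Hmain : (3 + INR (length b)) ^ 2 * pnorm b <= 16 * (INR n + 2) ^ 2 * growth (S n))
      by (apply Rmult_le_compat; [apply pow2_ge_0|apply pnorm_ge0|exact Hsq|exact Nb]).
    assert (Hmono : growth n <= growth (S n)).
    { rewrite growth_S. pose proof (growth_pos n). pose proof (pos_INR n). nra. }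
    pose proof (growth_pos (S n)). pose proof (pos_INR n). pose proof (pnorm_ge0 b).
    rewrite growth_S, S_INR. nra.
Qed.

Lemma wave_poly1_size : size_ok 1 wave_poly1.
Proof.
  unfold wave_poly1, size_ok.
  rewrite length_pscale, length_padd, length_pscale, pnorm_pscale.
  pose proof (length_pdt2 wave_poly0). pose proof (pnorm_pdt2 wave_poly0).
  pose proof (pnorm_padd (pdt2 wave_poly0) (pscale 2 wave_poly0)).
  rewrite pnorm_pscale in *. unfold wave_poly0, growth in *. simpl in *.
  rewrite Rabs_R1, (Rabs_right 2), (Rabs_right (/ 2)) in * by lra. split; [lia|lra].
Qed.

Lemma wave_poly_size n : size_ok n (wave_poly n).
Proof.
  enough (Hpair : size_ok n (wave_poly n) /\ size_ok (S n) (wave_poly (S n))) by apply Hpair.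
  induction n as [|n [IH0 IH1]]; split.
  - split; [simpl; lia|]. unfold growth; simpl. rewrite Rabs_R1. lra.
  - exact wave_poly1_size.
  - exact IH1.
  - rewrite wave_poly_SS. apply size_ok_next; assumption.
Qed.

Lemma fact_le_pow n : INR (fact n) <= INR n ^ n.
Proof.
  induction n as [|n IH]; [simpl; lra|].
  rewrite fact_simpl, mult_INR. change (INR (S n) ^ S n) with (INR (S n) * INR (S n) ^ n).
  apply Rmult_le_compat_l; [apply pos_INR|].
  eapply Rle_trans; [exact IH|]. apply pow_incr. split; [apply pos_INR|apply le_INR; lia].
Qed.

Lemma wave_sol_bound t x : 0 < t ->
  let M := Rmax 1 (/ t) in let n := Z.abs_nat x in
  Rabs (wave_sol t x) <= M * (19 * M ^ 4) ^ n * INR n ^ (2 * n).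
Proof.
  intros Ht M n. destruct (wave_poly_size n) as [Hlen Hnorm].
  assert (HM : 1 <= M) by apply Rmax_l.
  eapply Rle_trans; [apply (flat_bound _ _ Ht)|]. fold M.
  assert (Hgrowth : growth n <= 19 ^ n * INR n ^ (2 * n)).
  { unfold growth. apply Rmult_le_compat_l; [apply pow_le; lra|].
    rewrite Nat.mul_comm, pow_mult. apply pow_incr. split; [apply pos_INR|apply fact_le_pow]. }
  apply (Rle_trans _ (growth n * M ^ (4 * n + 1))).
  { apply Rmult_le_compat; [apply pnorm_ge0|apply pow_le; lra|exact Hnorm|apply Rle_pow; auto]. }
  replace (M * (19 * M ^ 4) ^ n * INR n ^ (2 * n)) with (19 ^ n * INR n ^ (2 * n) * M ^ (4 * n + 1))
    by (rewrite Rpow_mult_distr, pow_add, (pow_mult M 4 n); ring).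
  apply Rmult_le_compat_r; [apply pow_le; lra|exact Hgrowth].
Qed.

(* A bound K C^n n^(2n) is killed by the weight e^(-(2+eps) n ln n): the
   remaining factor is e^(n ln C - eps n ln n) <= e^(-n) < eta / K eventually. *)
Lemma superfactorial_decay K C eps eta : 0 <= K -> 0 < C -> 0 < eps -> 0 < eta ->
  exists N : nat, forall n : nat, (N < n)%nat ->
    K * C ^ n * INR n ^ (2 * n) * exp (- (2 + eps) * INR n * ln (INR n)) < eta.
Proof.
  intros HK HC Heps Heta.
  set (L := (ln C + 1) / eps).
  destruct (INR_unbounded (exp L)) as [N1 HN1].
  destruct (INR_unbounded (K / eta)) as [N2 HN2].
  exists (N1 + N2)%nat. intros n Hn.
  assert (Hn1 : exp L < INR n) by (apply (Rlt_le_trans _ (INR N1)); [lra|apply le_INR; lia]).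
  assert (Hn2 : K / eta < INR n) by (apply (Rlt_le_trans _ (INR N2)); [lra|apply le_INR; lia]).
  assert (Hnpos : 0 < INR n) by (pose proof (exp_pos L); lra).
  assert (HlnL : L < ln (INR n)) by (rewrite <- (ln_exp L); apply ln_increasing; auto; apply exp_pos).
  assert (HCn : C ^ n = exp (INR n * ln C)) by (rewrite <- ln_pow, exp_ln by (auto; apply pow_lt; lra); reflexivity).
  assert (Hnn : INR n ^ (2 * n) = exp (2 * INR n * ln (INR n))).
  { replace (2 * INR n) with (INR (2 * n)) by (rewrite mult_INR; reflexivity).
    rewrite <- ln_pow, exp_ln by (auto; apply pow_lt; lra). reflexivity. }
  set (z := INR n * ln C + 2 * INR n * ln (INR n) + - (2 + eps) * INR n * ln (INR n)).
  replace (K * C ^ n * INR n ^ (2 * n) * exp (- (2 + eps) * INR n * ln (INR n)))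
    with (K * exp z) by (unfold z; rewrite HCn, Hnn, !exp_plus; ring).
  assert (Hz : z <= - INR n).
  { unfold z. assert (eps * L = ln C + 1) by (unfold L; field; lra).
    assert (eps * L < eps * ln (INR n)) by (apply Rmult_lt_compat_l; lra). nra. }
  assert (Hexp : exp z <= / INR n).
  { apply (Rle_trans _ (exp (- INR n))).
    - destruct (Req_dec z (- INR n)) as [->|]; [lra|left; apply exp_increasing; lra].
    - rewrite exp_Ropp. apply Rinv_le_contravar; [lra|].
      pose proof (exp_ineq1_le (INR n)). lra. }
  apply (Rle_lt_trans _ (K * / INR n)); [apply Rmult_le_compat_l; auto|].
  apply (Rmult_lt_reg_r (INR n)); [lra|]. rewrite Rmult_assoc, Rinv_l, Rmult_1_r by lra.
  apply (Rmult_lt_reg_r (/ eta)); [apply Rinv_0_lt_compat; lra|].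
  replace (eta * INR n * / eta) with (INR n) by (field; lra). exact Hn2.
Qed.

Lemma wave_sol_decay eps t eta : 0 < eps -> 0 < eta -> exists N : nat,
  forall x : Z, (Z.of_nat N < Z.abs x)%Z ->
    Rabs (wave_sol t x) * exp (- (2 + eps) * IZR (Z.abs x) * ln (IZR (Z.abs x))) < eta.
Proof.
  intros Heps Heta. destruct (Rle_lt_dec t 0) as [Hle|Ht].
  { exists O. intros x _. unfold wave_sol. rewrite flat_nonpos, Rabs_R0, Rmult_0_l by lra. lra. }
  set (M := Rmax 1 (/ t)). assert (HM : 1 <= M) by apply Rmax_l.
  destruct (superfactorial_decay M (19 * M ^ 4) eps eta) as [N HN]; try lra.
  { pose proof (pow_R1_Rle M 4 HM). lra. }
  exists N. intros x Hx.
  rewrite <- Nat2Z.inj_abs_nat, <- INR_IZR_INZ.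
  assert (HxN : (N < Z.abs_nat x)%nat) by lia.
  eapply Rle_lt_trans; [|exact (HN _ HxN)].
  apply Rmult_le_compat_r; [left; apply exp_pos|exact (wave_sol_bound t x Ht)].
Qed.

Lemma CV_radius_pos_of_pseries (a : nat -> R) r l :
  0 < r -> is_pseries a r l -> Rbar_lt 0 (CV_radius a).
Proof.
  intros Hr Hs.
  assert (Hlim : is_lim_seq (fun k => scal (pow_n r k) (a k)) 0)
    by (apply ex_series_lim_0; exists l; exact Hs).
  destruct (filterlim_bounded _ (ex_intro _ 0 Hlim)) as [M HM].
  destruct (CV_radius_bounded a) as [Hub _].
  assert (Hle : Rbar_le r (CV_radius a)).
  { apply Hub. exists M. intro k. specialize (HM k).
    rewrite pow_n_pow in HM. rewrite Rmult_comm. exact HM. }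
  destruct (CV_radius a); simpl in *; lra.
Qed.

(* A function given by a power series on (-r, r) whose derivatives all vanish
   at 0 is identically 0 on (-r, r): its Taylor coefficients are zero. *)
Lemma pseries_flat_zero (f : R -> R) (a : nat -> R) r :
  0 < r -> (forall t, Rabs t < r -> is_pseries a t (f t)) ->
  (forall n, Derive_n f n 0 = 0) -> forall t, Rabs t < r -> f t = 0.
Proof.
  intros Hr Hf Hflat t Ht.
  assert (Hrad : Rbar_lt 0 (CV_radius a)).
  { apply (CV_radius_pos_of_pseries a (r / 2) (f (r / 2))); [lra|].
    apply Hf. rewrite Rabs_right; lra. }
  assert (Hnear : locally 0 (fun s => PSeries a s = f s)).
  { apply (filter_imp (fun s => -r < s /\ s < r)).
    - intros s Hs. apply is_pseries_unique, Hf, Rabs_def1; apply Hs.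
    - apply filter_and; [apply open_gt|apply open_lt]; lra. }
  assert (Hzero : forall n, a n = 0).
  { intro n. pose proof (Derive_n_coef a n Hrad) as Hc.
    rewrite (Derive_n_ext_loc _ _ n 0 Hnear), Hflat in Hc.
    pose proof (INR_fact_neq_0 n).
    destruct (Rmult_integral _ _ (eq_sym Hc)); [assumption|contradiction]. }
  rewrite <- (is_pseries_unique _ _ _ (Hf t Ht)), (PSeries_ext _ (fun _ => 0)) by exact Hzero.
  apply PSeries_const_0.
Qed.

(* e^(-1/t) (extended by 0) is flat at 0 but not zero, hence not analytic. *)
Lemma flat_not_analytic : ~ real_analytic (flat wave_poly0).
Proof.
  intros Hana. destruct (Hana 0) as [a [r [Hr Ha]]].
  assert (Hzero : flat wave_poly0 (r / 2) = 0).
  { apply (pseries_flat_zero _ a r Hr).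
    - intros t Ht. rewrite <- (Rminus_0_r t) at 1. apply Ha. rewrite Rminus_0_r. exact Ht.
    - intro n. rewrite Derive_n_flat. apply flat_nonpos, Rle_refl.
    - rewrite Rabs_right; lra. }
  rewrite flat_pos in Hzero by lra. simpl in Hzero.
  pose proof (exp_pos (- / (r / 2))). nra.
Qed.

Theorem theorem3p1 : forall eps : R, 0 < eps ->
  exists u : R -> Z -> R,
    (forall x : Z, C2 (fun t => u t x)) /\
    (forall (t : R) (x : Z),
       Derive (Derive (fun s => u s x)) t = lap_Z (u t) x) /\
    (forall x : Z, u 0 x = 0 /\ Derive (fun s => u s x) 0 = 0) /\
    (exists (t : R) (x : Z), u t x <> 0) /\
    ~ real_analytic (fun t => u t 0%Z) /\
    (forall t : R, forall eta : R, 0 < eta -> exists N : nat,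
       forall x : Z, (Z.of_nat N < Z.abs x)%Z ->
         Rabs (u t x) * exp (- (2 + eps) * IZR (Z.abs x) * ln (IZR (Z.abs x))) < eta).
Proof.
  intros eps Heps. exists wave_sol. unfold wave_sol.
  split; [|split; [|split; [|split; [|split]]]].
  - intro x. apply flat_C2.
  - exact wave_sol_equation.
  - intro x. rewrite Derive_flat. split; apply flat_nonpos, Rle_refl.
  - exists 1, 0%Z. rewrite flat_pos by lra. simpl. pose proof (exp_pos (- / 1)). lra.
  - exact flat_not_analytic.
  - intros t eta Heta. exact (wave_sol_decay eps t eta Heps Heta).
Qed.
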